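(* There exist $K$-algebras which are elementwise locally unit-regular but not locally unit-regular.
   Context: $K$ is a field; algebras are associative, not necessarily unital. A unital ring $S$ is unit-regular if for each $x\in S$ there is a unit $u$ of $S$ with $xux = x$. A $K$-algebra $R$ is locally unit-regular if every finite subset of $R$ is contained in a $K$-subalgebra of $R$ that has its own identity element and is unit-regular. A ring $R$ is elementwise locally unit-regular if for each $x \in R$ there exist an idempotent $e \in R$ and a unit $u$ of the corner ring $eRe$ (with identity $e$) such that $x \in eRe$ and $xux = x$. *)

From HB Require Import structures.
From mathcomp Require Import all_boot all_order all_algebra.
Set Implicit Arguments. Unset Strict Implicit. Unset Printing Implicit Defensive.
Import GRing.Theory.
Local Open Scope ring_scope.

Definition is_nu_algebra (K : fieldType) (V : lmodType K) (mul : V -> V -> V) : Prop :=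
  [/\ associative mul,
      (forall x y z, mul (x + y) z = mul x z + mul y z),
      (forall x y z, mul x (y + z) = mul x y + mul x z),
      (forall (a : K) x y, mul (a *: x) y = a *: mul x y)
    & (forall (a : K) x y, mul x (a *: y) = a *: mul x y)].

Definition is_subalgebra (K : fieldType) (V : lmodType K) (mul : V -> V -> V)
    (S : V -> Prop) : Prop :=
  [/\ S 0,
      (forall x y, S x -> S y -> S (x + y)),
      (forall (a : K) x, S x -> S (a *: x))
    & (forall x y, S x -> S y -> S (mul x y))].

Definition is_identity_of (K : fieldType) (V : lmodType K) (mul : V -> V -> V)
    (S : V -> Prop) (e : V) : Prop :=
  S e /\ (forall x, S x -> mul e x = x /\ mul x e = x).

Definition is_unit_in (K : fieldType) (V : lmodType K) (mul : V -> V -> V)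
    (S : V -> Prop) (e u : V) : Prop :=
  S u /\ exists v, S v /\ mul u v = e /\ mul v u = e.

Definition unital_unit_regular (K : fieldType) (V : lmodType K) (mul : V -> V -> V)
    (S : V -> Prop) : Prop :=
  exists e, is_identity_of mul S e /\
    (forall x, S x -> exists u, is_unit_in mul S e u /\ mul (mul x u) x = x).

Definition locally_unit_regular (K : fieldType) (V : lmodType K) (mul : V -> V -> V) : Prop :=
  forall s : seq V, exists S : V -> Prop,
    [/\ is_subalgebra mul S, (forall x, x \in s -> S x) & unital_unit_regular mul S].

Definition corner (K : fieldType) (V : lmodType K) (mul : V -> V -> V) (e : V) : V -> Prop :=
  fun x => exists r, x = mul (mul e r) e.

Definition elementwise_locally_unit_regular (K : fieldType) (V : lmodType K)
    (mul : V -> V -> V) : Prop :=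
  forall x : V, exists e u : V,
    [/\ mul e e = e, corner mul e x, is_unit_in mul (corner mul e) e u
      & mul (mul x u) x = x].

(* The algebra is the union R of the corners P_n End(V) P_n of the endomorphism
   ring of V = K^I, where I is the set of sequences of naturals and P_n projects
   onto the coordinates indexed by sequences supported in [0, n).  The range of
   P_(n+1) is a product of countably many copies of the range of P_n, which yields
   a shift S_n and its left inverse T_n in R with T_n S_n = P_(n+1) and
   S_n T_n = P_(n+1) - P_n.
   Every x in P_n R P_n has an inner inverse because End(V) is von Neumann
   regular, and an Eilenberg swindle along the copies turns it into a unit u of
   P_(n+1) R P_(n+1) with x u x = x.
   If instead some unital unit-regular subalgebra with identity f contained S_0
   and T_0, then S_0 + f - P_1 would be unit-regular with left inverse
   T_0 + f - P_1, hence invertible; but its product with T_0 + f - P_1 on the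
   other side is f - P_0, so P_0 = 0, which is absurd. *)

From HB Require Import structures.
From mathcomp Require Import all_boot all_order all_algebra.
From mathcomp Require Import boolp classical_sets functions.
Set Implicit Arguments. Unset Strict Implicit. Unset Printing Implicit Defensive.
Import GRing.Theory.
Local Open Scope classical_set_scope.
Local Open Scope ring_scope.

Section Endomorphisms.
Variables (K : fieldType) (V : lmodType K).

Definition linp : {pred (V -> V)} := fun x => `[< linear x >].

Lemma linp_subsemimod_closed : subsemimod_closed linp.
Proof.
split; [split|].
- by apply/asboolP => a u w; rewrite scaler0 addr0.
- move=> x y /asboolP lx /asboolP ly; apply/asboolP => a u w.
  by rewrite !fctE lx ly scalerDr addrACA.
- move=> a x /asboolP lx; apply/asboolP => b u w.
  by rewrite !fctE lx scalerDr !scalerA mulrC.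
Qed.

HB.instance Definition _ := GRing.isSubmodClosed.Build K (V -> V) linp linp_subsemimod_closed.

Record lend := Lend { lfun :> V -> V; lfunP : lfun \in linp }.
HB.instance Definition _ := [isSub for lfun].
HB.instance Definition _ := [Choice of lend by <:].
HB.instance Definition _ := [SubChoice_isSubLmodule of lend by <:].

Lemma lend_linear (x : lend) : linear x. Proof. exact/asboolP/lfunP. Qed.
HB.instance Definition _ (x : lend) := GRing.isLinear.Build K V V *:%R x (lend_linear x).

Lemma lendP (x y : lend) : x =1 y -> x = y.
Proof. by move=> h; apply: val_inj; apply/funext. Qed.

Lemma comp_linp (x y : lend) : (x \o y) \in linp.
Proof. by apply/asboolP => a u w; rewrite /= !linearP. Qed.

Lemma id_linp : idfun \in linp. Proof. exact/asboolP. Qed.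

Definition lend_mul (x y : lend) : lend := Lend (comp_linp x y).
Definition lend1 : lend := Lend id_linp.

Lemma lend_mulA : associative lend_mul. Proof. by move=> x y z; apply: lendP. Qed.
Lemma lend_mul1 : left_id lend1 lend_mul. Proof. by move=> x; apply: lendP. Qed.
Lemma lend_mulr1 : right_id lend1 lend_mul. Proof. by move=> x; apply: lendP. Qed.
Lemma lend_mulDl : left_distributive lend_mul +%R. Proof. by move=> x y z; apply: lendP. Qed.
Lemma lend_mulDr : right_distributive lend_mul +%R.
Proof. by move=> x y z; apply: lendP => v /=; rewrite linearD. Qed.

HB.instance Definition _ := GRing.Zmodule_isPzRing.Build lend
  lend_mulA lend_mul1 lend_mulr1 lend_mulDl lend_mulDr.

Lemma lend_mulE (x y : lend) v : (x * y) v = x (y v). Proof. by []. Qed.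
Lemma lend_addE (x y : lend) v : (x + y) v = x v + y v. Proof. by []. Qed.
Lemma lend_scaleE a (x : lend) v : (a *: x) v = a *: x v. Proof. by []. Qed.

Lemma lend_mulZl a (x y : lend) : (a *: x) * y = a *: (x * y).
Proof. by apply: lendP. Qed.
Lemma lend_mulZr a (x y : lend) : x * (a *: y) = a *: (x * y).
Proof. by apply: lendP => v; rewrite lend_mulE !lend_scaleE linearZ. Qed.

Definition subspace (W : set V) := W 0 /\ forall a u w, W u -> W w -> W (a *: u + w).

Lemma subspaceB (W : set V) u w : subspace W -> W u -> W w -> W (u - w).
Proof. by move=> [_ Wlin] Wu Ww; rewrite addrC -scaleN1r; apply: Wlin. Qed.

Lemma subspace_complement (M : set V) : subspace M ->
  exists C : set V, [/\ subspace C, (forall v, C v -> M v -> v = 0)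
    & forall w, exists m c, [/\ M m, C c & w = m + c]].
Proof.
move=> [M0 Mlin].
pose candidate (C : set V) :=
  (forall a u w, C u -> C w -> C (a *: u + w)) /\ (forall v, C v -> M v -> v = 0).
have [C [[Clin CM] Cmax]] : exists C, candidate C /\ forall B, C `<` B -> ~ candidate B.
  apply: Zorn_bigcup => F FP Ftot; split.
  - move=> a u w [X FX Xu] [Y FY Yw].
    have [XY|YX] := Ftot X Y FX FY.
    + by exists Y => //; apply: (FP Y FY).1 => //; exact: XY.
    + by exists X => //; apply: (FP X FX).1 => //; exact: YX.
  - by move=> v [X FX Xv]; apply: (FP X FX).2.
have C0 : C 0.
  have [[c Cc]|noC] := pselect (exists c, C c).
    by have := Clin (-1) c c Cc Cc; rewrite scaleN1r addNr.
  apply: contrapT => nC0; apply: (Cmax [set 0]).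
    by split=> [v Cv|/(_ 0 erefl)//]; case: noC; exists v.
  by split=> [a _ _ -> ->|_ ->]; rewrite ?scaler0 ?addr0.
exists C; split => // w; apply: contrapT => nw.
pose B v := exists c l, C c /\ v = c + l *: w.
apply: (Cmax B).
  split=> [v Cv|BC]; first by exists v, 0; rewrite scale0r addr0.
  apply: nw; exists 0, w; split; rewrite ?add0r //.
  by apply: BC; exists 0, 1; rewrite add0r scale1r.
split.
- move=> a _ _ [c1 [l1 [Cc1 ->]]] [c2 [l2 [Cc2 ->]]].
  exists (a *: c1 + c2), (a * l1 + l2); split; first exact: Clin.
  by rewrite scalerDr scalerDl scalerA addrACA.
- move=> _ [c [l [Cc ->]]] Mv.
  have [l0|lN0] := eqVneq l 0.
    by move: Mv; rewrite l0 scale0r addr0 => /(CM _ Cc) ->.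
  case: nw; exists (l^-1 *: (c + l *: w)), ((- l^-1) *: c); split.
  + by have := Mlin l^-1 _ 0 Mv M0; rewrite addr0.
  + by have := Clin (- l^-1) c 0 Cc C0; rewrite addr0.
  + by rewrite scalerDr scalerA mulVf // scale1r scaleNr addrAC subrr add0r.
Qed.

Lemma lend_regular (x : lend) : exists y : lend, x * y * x = x.
Proof.
have ker_sub : subspace [set v | x v = 0].
  split=> [|a u w xu xw] /=; first exact: linear0.
  by rewrite linearP /= xu xw scaler0 addr0.
have img_sub : subspace (range x).
  split; first by exists 0; rewrite ?linear0.
  by move=> a _ _ [u _ <-] [w _ <-]; exists (a *: u + w); rewrite ?linearP.
have [C1 [C1_sub C1ker C1sum]] := subspace_complement ker_sub.
have [C2 [C2_sub C2img C2sum]] := subspace_complement img_sub.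
pose preim w c := C1 c /\ exists2 d, C2 d & w = x c + d.
have preim_ex w : exists c, preim w c.
  have [_ [d [[u _ <-] C2d ->]]] := C2sum w.
  have [k [c [xk C1c ->]]] := C1sum u.
  by exists c; split => //; exists d => //; rewrite linearD /= xk add0r.
have preim_uniq w c c' : preim w c -> preim w c' -> c = c'.
  move=> [C1c [d C2d ->]] [C1c' [d' C2d' e]].
  have xcc' : x (c - c') = d' - d.
    by rewrite linearB /= -(addrK d (x c)) e addrAC [_ + d']addrC addrK.
  have dd' : d' - d = 0 by apply: C2img; [exact: subspaceB | exists (c - c')].
  apply/eqP; rewrite -subr_eq0; apply/eqP; apply: C1ker; first exact: subspaceB.
  by rewrite /= xcc' dd'.
have [yf yfP] := choice preim_ex.
have yf_linp : yf \in linp.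
  apply/asboolP => a u w; apply: preim_uniq (yfP _) _.
  have [C1u [du C2u eu]] := yfP u; have [C1w [dw C2w ew]] := yfP w.
  split; first by case: C1_sub => _; apply.
  exists (a *: du + dw); first by case: C2_sub => _; apply.
  by rewrite linearP addrACA -scalerDr -eu -ew.
exists (Lend yf_linp); apply: lendP => v; rewrite !lend_mulE /=.
have [_ [d C2d e]] := yfP (x v).
suff d0 : d = 0 by rewrite [RHS]e d0 addr0.
apply: C2img => //; exists (v - yf (x v)) => //.
by rewrite linearB /= {1}e addrAC subrr add0r.
Qed.

End Endomorphisms.

Arguments linp {K V}.
Arguments lend {K} V.

Lemma corner_absorb (R : pzRingType) (P a : R) :
  P * P = P -> P * a * P = a -> P * a = a /\ a * P = a.
Proof. by move=> PP Pa; split; rewrite -Pa ?mulrA ?PP // -!mulrA PP. Qed.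

Lemma corner_reflexive_inverse (R : pzRingType) (P x y : R) :
  P * P = P -> P * x * P = x -> x * y * x = x ->
  exists z, [/\ P * z * P = z, x * z * x = x & z * x * z = z].
Proof.
move=> PP Pcx xyx.
have [Px xP] := corner_absorb PP Pcx.
have [z [xzx zxz]] : exists z, x * z * x = x /\ z * x * z = z.
  exists (y * x * y); split; first by rewrite !mulrA !xyx.
  have yxyx : y * x * y * x = y * x by rewrite -!mulrA (mulrA x y x) xyx.
  by rewrite yxyx !mulrA yxyx.
exists (P * z * P); split.
- by rewrite -!mulrA PP mulrA PP.
- by rewrite -!mulrA (mulrA x P) xP Px mulrA xzx.
- rewrite -!mulrA (mulrA P x) Px (mulrA x P) xP.
  by rewrite (mulrA z x) (mulrA (z * x)) zxz.
Qed.

(* S, T and D model Q R Q as countably many copies of P R P: S moves each copy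
   to the next one, T moves it back and D a acts as a on every copy.  For an
   idempotent e of P R P, swl e keeps the summand P - e of every copy and pushes
   its summand e one copy up, an isomorphism from Q onto Q - e with inverse
   swr e.  The unit is y on xy and swl (y x) * swr (x y) on Q - xy. *)
Section Swindle.
Variables (R : pzRingType) (P Q S T : R) (D : R -> R).
Hypotheses (PP : P * P = P) (PQ : P * Q = P) (QP : Q * P = P).
Hypotheses (TS : T * S = Q) (ST : S * T = Q - P) (PS : P * S = 0) (TP : T * P = 0)
  (QS : Q * S = S) (TQ : T * Q = T).
Hypotheses (D_add : {morph D : a b / a + b}) (D_P : D P = Q)
  (D_mul : forall a b, P * b = b -> D (a * b) = D a * D b)
  (D_S : forall a, D a * S = S * D a) (T_D : forall a, T * D a = D a * T)
  (Q_D : forall a, Q * D a = D a) (D_Q : forall a, D a * Q = D a)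
  (DP_corner : forall a, P * a * P = a -> D a * P = a)
  (PD_corner : forall a, P * a * P = a -> P * D a = a).

Lemma D0 : D 0 = 0.
Proof. by apply: (@addrI _ (D 0)); rewrite -D_add !addr0. Qed.

Let swl e := D (P - e) + S * D e.
Let swr e := D (P - e) + D e * T.

Lemma Q_swl e : Q * swl e = swl e.
Proof. by rewrite mulrDr Q_D mulrA QS. Qed.

Lemma Q_swr e : Q * swr e = swr e.
Proof. by rewrite mulrDr Q_D mulrA Q_D. Qed.

Lemma swr_Q e : swr e * Q = swr e.
Proof. by rewrite mulrDl D_Q -mulrA TQ. Qed.

Section Idempotent.
Variable e : R.
Hypotheses (Pe : P * e = e) (eP : e * P = e) (ee : e * e = e).

Let Pf : P * (P - e) = P - e. Proof. by rewrite mulrBr PP Pe. Qed.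
Let fP : (P - e) * P = P - e. Proof. by rewrite mulrBl PP eP. Qed.
Let ff : (P - e) * (P - e) = P - e. Proof. by rewrite mulrBl Pf mulrBr eP ee subrr subr0. Qed.
Let ef : e * (P - e) = 0. Proof. by rewrite mulrBr eP ee subrr. Qed.
Let fe : (P - e) * e = 0. Proof. by rewrite mulrBl Pe ee subrr. Qed.
Let Dfe : D (P - e) + D e = Q. Proof. by rewrite -D_add subrK D_P. Qed.
Let ecorner : P * e * P = e. Proof. by rewrite Pe eP. Qed.
Let fcorner : P * (P - e) * P = P - e. Proof. by rewrite Pf fP. Qed.

Lemma swr_swl : swr e * swl e = Q.
Proof.
have DfDf : D (P - e) * D (P - e) = D (P - e) by rewrite -(D_mul _ Pf) ff.
have DfSDe : D (P - e) * (S * D e) = 0.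
  by rewrite mulrA D_S -mulrA -(D_mul _ Pe) fe D0 mulr0.
have DeTDf : D e * T * D (P - e) = 0 by rewrite -mulrA T_D mulrA -(D_mul _ Pf) ef D0 mul0r.
have DeTSDe : D e * T * (S * D e) = D e.
  by rewrite -mulrA (mulrA T) TS Q_D -(D_mul _ Pe) ee.
by rewrite mulrDl !mulrDr DfDf DfSDe DeTDf DeTSDe addr0 add0r.
Qed.

Lemma swl_swr : swl e * swr e = Q - e.
Proof.
have DfDf : D (P - e) * D (P - e) = D (P - e) by rewrite -(D_mul _ Pf) ff.
have DfDeT : D (P - e) * (D e * T) = 0 by rewrite mulrA -(D_mul _ Pe) fe D0 mul0r.
have SDeDf : S * D e * D (P - e) = 0 by rewrite -mulrA -(D_mul _ Pf) ef D0 mulr0.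
have SDeDeT : S * D e * (D e * T) = D e - e.
  by rewrite mulrA -(mulrA S) -(D_mul _ Pe) ee -D_S -mulrA ST mulrBr D_Q (DP_corner ecorner).
by rewrite mulrDl !mulrDr DfDf DfDeT SDeDf SDeDeT addr0 add0r addrA Dfe.
Qed.

Lemma mul_swl z : z * P = z -> z * swl e = z - z * e.
Proof.
move=> zP.
have zDf : z * D (P - e) = z - z * e by rewrite -zP -mulrA (PD_corner fcorner) mulrBr zP.
have zSDe : z * (S * D e) = 0 by rewrite -zP -mulrA (mulrA P S) PS mul0r mulr0.
by rewrite mulrDr zDf zSDe addr0.
Qed.

Lemma swr_mul z : P * z = z -> swr e * z = z - e * z.
Proof.
move=> Pz.
have Dfz : D (P - e) * z = z - e * z by rewrite -Pz mulrA (DP_corner fcorner) mulrBl Pz.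
have DeTz : D e * T * z = 0 by rewrite -Pz mulrA -(mulrA _ T P) TP mulr0 mul0r.
by rewrite mulrDl Dfz DeTz addr0.
Qed.

End Idempotent.

Variables x y : R.
Hypotheses (xyx : x * y * x = x) (yxy : y * x * y = y).
Hypotheses (Px : P * x = x) (xP : x * P = x) (Py : P * y = y) (yP : y * P = y).

Lemma swindle_unit_regular :
  exists u v, [/\ u * v = Q, v * u = Q, x * u * x = x, Q * u * Q = u & Q * v * Q = v].
Proof.
have Pyx : P * (y * x) = y * x by rewrite mulrA Py.
have yxP : y * x * P = y * x by rewrite -mulrA xP.
have yxyx : y * x * (y * x) = y * x by rewrite mulrA yxy.
have Pxy : P * (x * y) = x * y by rewrite mulrA Px.
have xyP : x * y * P = x * y by rewrite -mulrA yP.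
have xyxy : x * y * (x * y) = x * y by rewrite mulrA xyx.
have xL1 : x * swl (y * x) = 0 by rewrite mul_swl // mulrA xyx subrr.
have yL2 : y * swl (x * y) = 0 by rewrite mul_swl // mulrA yxy subrr.
have R1y : swr (y * x) * y = 0 by rewrite swr_mul // yxy subrr.
have R2x : swr (x * y) * x = 0 by rewrite swr_mul // xyx subrr.
have Qy : Q * y = y by rewrite -Py mulrA QP.
have yQ : y * Q = y by rewrite -yP -mulrA PQ.
have Qx : Q * x = x by rewrite -Px mulrA QP.
have xQ : x * Q = x by rewrite -xP -mulrA PQ.
have R1L1 := swr_swl Pyx yxP yxyx; have L1R1 := swl_swr Pyx yxP yxyx.
have R2L2 := swr_swl Pxy xyP xyxy; have L2R2 := swl_swr Pxy xyP xyxy.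
have QL1 := Q_swl (y * x); have QR1 := Q_swr (y * x); have R1Q := swr_Q (y * x).
have QL2 := Q_swl (x * y); have QR2 := Q_swr (x * y); have R2Q := swr_Q (x * y).
set L1 := swl (y * x) in xL1 R1L1 L1R1 QL1; set R1 := swr (y * x) in R1y R1L1 L1R1 QR1 R1Q.
set L2 := swl (x * y) in yL2 R2L2 L2R2 QL2; set R2 := swr (x * y) in R2x R2L2 L2R2 QR2 R2Q.
clearbody L1 R1 L2 R2.
exists (y + L1 * R2), (x + L2 * R1); split.
- rewrite mulrDl !mulrDr mulrA yL2 mul0r -(mulrA _ _ x) R2x mulr0.
  by rewrite -mulrA (mulrA R2) R2L2 QR1 L1R1 addr0 add0r addrC subrK.
- rewrite mulrDl !mulrDr mulrA xL1 mul0r -(mulrA _ _ y) R1y mulr0.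
  by rewrite -mulrA (mulrA R1) R1L1 QR2 L2R2 addr0 add0r addrC subrK.
- by rewrite mulrDr mulrDl xyx mulrA xL1 !mul0r addr0.
- by rewrite mulrDr mulrDl Qy yQ mulrA QL1 -mulrA R2Q.
- by rewrite mulrDr mulrDl Qx xQ mulrA QL2 -mulrA R1Q.
Qed.

End Swindle.

Lemma unit_regular_linv_rinv (R : pzRingType) (f a b u w : R) :
  f * a = a -> b * f = b -> f * u = u -> w * f = w -> w * u = f ->
  b * a = f -> a * u * a = a -> a * b = f.
Proof.
move=> fa bf fu wf wu ba aua.
have ua : u * a = f by rewrite -ba -[in RHS]aua !mulrA ba fu.
have wa : w = a by rewrite -wf -ua mulrA wu fa.
have au : a * u = f by rewrite -wa wu.
have bu : b = u by rewrite -bf -au mulrA ba fu.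
by rewrite bu au.
Qed.

Section ShiftNotUnitRegular.
Variables (R : pzRingType) (f s t p q : R).
Hypotheses (fs : f * s = s) (sf : s * f = s) (ft : f * t = t) (tf : t * f = t) (ff : f * f = f).
Hypotheses (ts : t * s = p) (st : s * t = p - q).
Hypotheses (ps : p * s = s) (sp : s * p = s) (pt : p * t = t) (tp : t * p = t) (pp : p * p = p).

Lemma shift_unit_regular_eq0 u w : f * u = u -> w * f = w -> w * u = f ->
  (s + (f - p)) * u * (s + (f - p)) = s + (f - p) -> q = 0.
Proof.
move=> fu wf wu reg.
have fp : f * p = p by rewrite -ts mulrA ft.
have pf : p * f = p by rewrite -ts -mulrA sf.
have gs : (f - p) * s = 0 by rewrite mulrBl fs ps subrr.
have sg : s * (f - p) = 0 by rewrite mulrBr sf sp subrr.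
have tg : t * (f - p) = 0 by rewrite mulrBr tf tp subrr.
have gt : (f - p) * t = 0 by rewrite mulrBl ft pt subrr.
have gg : (f - p) * (f - p) = f - p by rewrite mulrBr !mulrBl ff pf fp pp subrr subr0.
have linv : (t + (f - p)) * (s + (f - p)) = f.
  by rewrite mulrDl (mulrDr t) (mulrDr (f - p)) ts tg gs gg addr0 add0r addrC subrK.
have rinv : (s + (f - p)) * (t + (f - p)) = f - q.
  by rewrite mulrDl (mulrDr s) (mulrDr (f - p)) st sg gt gg addr0 add0r addrC addrA subrK.
have fa : f * (s + (f - p)) = s + (f - p) by rewrite mulrDr fs mulrBr ff fp.
have bf : (t + (f - p)) * f = t + (f - p) by rewrite mulrDl tf mulrBl ff pf.
have : f - q = f by rewrite -rinv (unit_regular_linv_rinv fa bf fu wf wu linv reg).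
by move/eqP; rewrite subr_eq -{1}(addr0 f) (inj_eq (addrI f)) eq_sym => /eqP.
Qed.

End ShiftNotUnitRegular.

Section ShiftAlgebra.
Variable K : fieldType.

Definition supp_lt n (f : nat -> nat) : bool := `[< forall i, (n <= i)%N -> f i = 0%N >].

Lemma supp_ltP n f : reflect (forall i, (n <= i)%N -> f i = 0%N) (supp_lt n f).
Proof. exact: asboolP. Qed.

Definition upd (f : nat -> nat) n k : nat -> nat := fun i => if i == n then k else f i.

Lemma upd_eq f n k : upd f n k n = k. Proof. by rewrite /upd eqxx. Qed.

Lemma upd_upd f n k l : upd (upd f n k) n l = upd f n l.
Proof. by apply/funext => i; rewrite /upd; case: eqP. Qed.

Lemma upd_id f n : upd f n (f n) = f.
Proof. by apply/funext => i; rewrite /upd; case: eqP => // ->. Qed.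

Lemma supp_lt_le m n f : (m <= n)%N -> supp_lt m f -> supp_lt n f.
Proof. by move=> mn /supp_ltP f0; apply/supp_ltP => i ni; apply: f0 (leq_trans mn ni). Qed.

Lemma supp_ltE n f : supp_lt n f = supp_lt n.+1 f && (f n == 0%N).
Proof.
apply/supp_ltP/andP => [f0|[/supp_ltP f0 /eqP fn0] i].
  by split; [apply/supp_ltP => i /ltnW; exact: f0 | apply/eqP/f0].
by rewrite leq_eqVlt => /predU1P[<- //|]; exact: f0.
Qed.

Lemma supp_ltS_upd n f k : supp_lt n.+1 (upd f n k) = supp_lt n.+1 f.
Proof. by apply: asbool_equiv_eq; split=> f0 i ni; have := f0 i ni; rewrite /upd gtn_eqF. Qed.

Lemma supp_lt_upd n f k : supp_lt n (upd f n k) = supp_lt n.+1 f && (k == 0%N).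
Proof. by rewrite supp_ltE supp_ltS_upd upd_eq. Qed.

Lemma supp_lt_upd_id n f : supp_lt n f -> upd f n 0 = f.
Proof. by rewrite supp_ltE => /andP[_ /eqP <-]; rewrite upd_id. Qed.

Definition space := (nat -> nat) -> K^o.

Lemma guarded_reindex_linp (c : pred (nat -> nat)) (g : (nat -> nat) -> nat -> nat) :
  (fun (v : space) f => if c f then v (g f) else 0) \in linp.
Proof.
apply/asboolP => a u w; apply/funext => f; rewrite !fctE.
by case: ifP; rewrite ?scaler0 ?addr0.
Qed.

(* projv n keeps the coordinates indexed by sequences supported in [0, n).
   Sorting the sequences supported in [0, n] by their n-th entry k identifies
   the range of projv n.+1 with countably many copies of the range of projv n;
   fibre n k v is the k-th copy of v. *)
Definition projv n (v : space) : space := fun f => if supp_lt n f then v f else 0.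
Definition shiftv n (v : space) : space := fun f =>
  if supp_lt n.+1 f && (0 < f n)%N then v (upd f n (f n).-1) else 0.
Definition unshiftv n (v : space) : space := fun f =>
  if supp_lt n.+1 f then v (upd f n (f n).+1) else 0.
Definition fibre n k (v : space) : space := fun g =>
  if supp_lt n g then v (upd g n k) else 0.

Definition proj n : lend space := Lend (guarded_reindex_linp (supp_lt n) id : projv n \in linp).
Definition shift n : lend space :=
  Lend (guarded_reindex_linp _ (fun f => upd f n (f n).-1) : shiftv n \in linp).
Definition unshift n : lend space :=
  Lend (guarded_reindex_linp _ (fun f => upd f n (f n).+1) : unshiftv n \in linp).

Lemma fibre_linear n k : linear (fibre n k).
Proof. exact/asboolP/(guarded_reindex_linp _ (fun g => upd g n k)). Qed.

Definition diagv n (a : lend space) (v : space) : space := fun f =>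
  if supp_lt n.+1 f then a (fibre n (f n) v) (upd f n 0) else 0.

Lemma diagv_linp n a : diagv n a \in linp.
Proof.
apply/asboolP => b u w; apply/funext => f; rewrite /diagv !fctE.
case: ifP => _; last by rewrite scaler0 addr0.
by rewrite fibre_linear linearP.
Qed.

Definition diag n a : lend space := Lend (diagv_linp n a).

Lemma unshift_shift n : unshift n * shift n = proj n.+1.
Proof.
apply: lendP => v; apply/funext => f; rewrite lend_mulE /= /unshiftv /shiftv /projv.
by case: ifP => // fS; rewrite supp_ltS_upd fS upd_eq /= upd_upd upd_id.
Qed.

Lemma shift_unshift n : shift n * unshift n = proj n.+1 - proj n.
Proof.
apply: lendP => v; apply/funext => f; rewrite lend_mulE /= !fctE /shiftv /unshiftv /projv.
rewrite supp_ltS_upd (supp_ltE n f); case: (supp_lt n.+1 f) => /=; last by rewrite subr0.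
rewrite upd_eq; case: (posnP (f n)) => [_|fn_gt0] /=; first by rewrite subrr.
by rewrite subr0 upd_upd prednK // upd_id.
Qed.

Lemma proj_shift n : proj n * shift n = 0.
Proof.
apply: lendP => v; apply/funext => f; rewrite lend_mulE /= /projv /shiftv (supp_ltE n f).
by case: (supp_lt n.+1 f); case: eqP => //= ->.
Qed.

Lemma unshift_proj n : unshift n * proj n = 0.
Proof.
apply: lendP => v; apply/funext => f; rewrite lend_mulE /= /unshiftv /projv supp_lt_upd.
by case: (supp_lt n.+1 f).
Qed.

Lemma proj_mul m n : proj m * proj n = proj (minn m n).
Proof.
have [mn|/ltnW nm] := leqP m n;
  apply: lendP => v; apply/funext => f; rewrite lend_mulE /= /projv.
  by case fm: (supp_lt m f); rewrite ?(supp_lt_le mn fm).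
by case fn: (supp_lt n f); rewrite ?(supp_lt_le nm fn) //; case: ifP.
Qed.

Lemma projK n : proj n * proj n = proj n.
Proof. by rewrite proj_mul minnn. Qed.

Lemma projS_shift n : proj n.+1 * shift n = shift n.
Proof.
apply: lendP => v; apply/funext => f; rewrite lend_mulE /= /projv /shiftv.
by case: (supp_lt n.+1 f).
Qed.

Lemma shift_projS n : shift n * proj n.+1 = shift n.
Proof.
apply: lendP => v; apply/funext => f; rewrite lend_mulE /= /projv /shiftv supp_ltS_upd.
by case: (supp_lt n.+1 f).
Qed.

Lemma projS_unshift n : proj n.+1 * unshift n = unshift n.
Proof.
apply: lendP => v; apply/funext => f; rewrite lend_mulE /= /projv /unshiftv.
by case: (supp_lt n.+1 f).
Qed.

Lemma unshift_projS n : unshift n * proj n.+1 = unshift n.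
Proof.
apply: lendP => v; apply/funext => f; rewrite lend_mulE /= /projv /unshiftv supp_ltS_upd.
by case: (supp_lt n.+1 f).
Qed.

Lemma fibre_shift n k v :
  fibre n k (shiftv n v) = if (0 < k)%N then fibre n k.-1 v else 0.
Proof.
apply/funext => g; rewrite /fibre /shiftv supp_ltS_upd upd_eq upd_upd.
case gn: (supp_lt n g); rewrite ?(supp_lt_le (leqnSn n) gn) /=;
  by case: (0 < k)%N; rewrite /= ?gn.
Qed.

Lemma fibre_unshift n k v : fibre n k (unshiftv n v) = fibre n k.+1 v.
Proof.
apply/funext => g; rewrite /fibre /unshiftv supp_ltS_upd upd_eq upd_upd.
by case gn: (supp_lt n g); rewrite ?(supp_lt_le (leqnSn n) gn).
Qed.

Lemma fibre_proj n k v : fibre n k (projv n v) = if k == 0%N then projv n v else 0.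
Proof.
apply/funext => g; rewrite /fibre /projv supp_lt_upd.
case gn: (supp_lt n g); rewrite ?(supp_lt_le (leqnSn n) gn) /=;
  by case: eqP => [k0|] //=; rewrite gn ?k0 ?(supp_lt_upd_id gn).
Qed.

Lemma fibre_projS n k v : fibre n k (projv n.+1 v) = fibre n k v.
Proof.
apply/funext => g; rewrite /fibre /projv supp_ltS_upd.
by case gn: (supp_lt n g); rewrite ?(supp_lt_le (leqnSn n) gn).
Qed.

Lemma fibre0 n v : fibre n 0 v = projv n v.
Proof. by apply/funext => g; rewrite /fibre /projv; case gn: (supp_lt n g); rewrite ?supp_lt_upd_id. Qed.

Lemma fibre_diag n k a v : fibre n k (diagv n a v) = projv n (a (fibre n k v)).
Proof.
apply/funext => g; rewrite /fibre /diagv /projv supp_ltS_upd upd_eq upd_upd.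
by case gn: (supp_lt n g); rewrite ?(supp_lt_le (leqnSn n) gn) ?supp_lt_upd_id.
Qed.

Lemma diag_shift n a : diag n a * shift n = shift n * diag n a.
Proof.
apply: lendP => v; apply/funext => f; rewrite !lend_mulE /= /diagv /shiftv fibre_shift.
rewrite supp_ltS_upd upd_eq upd_upd; case: (supp_lt n.+1 f) => //=.
by case: (posnP (f n)) => //= _; rewrite linear0.
Qed.

Lemma unshift_diag n a : unshift n * diag n a = diag n a * unshift n.
Proof.
apply: lendP => v; apply/funext => f; rewrite !lend_mulE /= /diagv /unshiftv fibre_unshift.
by rewrite supp_ltS_upd upd_eq upd_upd; case: (supp_lt n.+1 f).
Qed.

Lemma diagD n : {morph diag n : a b / a + b}.
Proof.
move=> a b; apply: lendP => v; apply/funext => f; rewrite lend_addE /= !fctE /diagv.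
by case: ifP; rewrite ?addr0.
Qed.

Lemma diagM n a b : proj n * b = b -> diag n (a * b) = diag n a * diag n b.
Proof.
move=> Pb; apply: lendP => v; apply/funext => f; rewrite !lend_mulE /= /diagv fibre_diag.
by rewrite -[in LHS]Pb.
Qed.

Lemma diag_proj n : diag n (proj n) = proj n.+1.
Proof.
apply: lendP => v; apply/funext => f; rewrite /= /diagv /= /projv /fibre supp_lt_upd eqxx andbT.
by case fS: (supp_lt n.+1 f); rewrite ?fS //= upd_upd upd_id.
Qed.

Lemma projS_diag n a : proj n.+1 * diag n a = diag n a.
Proof.
apply: lendP => v; apply/funext => f; rewrite lend_mulE /= /projv /diagv.
by case: (supp_lt n.+1 f).
Qed.

Lemma diag_projS n a : diag n a * proj n.+1 = diag n a.
Proof.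
by apply: lendP => v; apply/funext => f; rewrite lend_mulE /= /diagv fibre_projS.
Qed.

Lemma diag_proj_corner n a : proj n * a * proj n = a -> diag n a * proj n = a.
Proof.
move=> Pa; apply: lendP => v; apply/funext => f.
rewrite -[in RHS]Pa !lend_mulE /= /diagv /projv fibre_proj (supp_ltE n f).
case: (supp_lt n.+1 f) => //=; case: eqP => [fn0|_]; last by rewrite linear0.
by rewrite -fn0 upd_id.
Qed.

Lemma proj_diag_corner n a : proj n * a * proj n = a -> proj n * diag n a = a.
Proof.
move=> Pa; apply: lendP => v; apply/funext => f.
rewrite -[in RHS]Pa !lend_mulE /= /diagv /projv.
case fn: (supp_lt n f) => //.
have /andP[fS /eqP fn0] : supp_lt n.+1 f && (f n == 0%N) by rewrite -supp_ltE.
by rewrite fS fn0 fibre0 (supp_lt_upd_id fn).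
Qed.

Lemma proj_corner_le m n x : (m <= n)%N -> proj m * x * proj m = x -> proj n * x * proj n = x.
Proof.
move=> mn xm; rewrite -xm !mulrA proj_mul (minn_idPr mn).
by rewrite -!mulrA proj_mul (minn_idPl mn).
Qed.

Definition bounded : {pred lend space} := fun x => `[< exists n, proj n * x * proj n = x >].

Lemma bounded_subsemimod_closed : subsemimod_closed bounded.
Proof.
split; [split|].
- by apply/asboolP; exists 0%N; rewrite mulr0 mul0r.
- move=> x y /asboolP[m xm] /asboolP[n yn]; apply/asboolP; exists (maxn m n).
  by rewrite mulrDr mulrDl (proj_corner_le (leq_maxl m n) xm) (proj_corner_le (leq_maxr m n) yn).
- move=> a x /asboolP[n xn]; apply/asboolP; exists n.
  by rewrite lend_mulZr lend_mulZl xn.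
Qed.

HB.instance Definition _ :=
  GRing.isSubmodClosed.Build K (lend space) bounded bounded_subsemimod_closed.

Record bounded_end := BoundedEnd { bval :> lend space; bvalP : bval \in bounded }.
HB.instance Definition _ := [isSub for bval].
HB.instance Definition _ := [Choice of bounded_end by <:].
HB.instance Definition _ := [SubChoice_isSubLmodule of bounded_end by <:].

Lemma bounded_mul_in (x y : bounded_end) : bval x * bval y \in bounded.
Proof.
have /asboolP[m xm] := bvalP x; have /asboolP[n yn] := bvalP y.
apply/asboolP; exists (maxn m n).
have [Px _] := corner_absorb (projK _) (proj_corner_le (leq_maxl m n) xm).
have [_ yP] := corner_absorb (projK _) (proj_corner_le (leq_maxr m n) yn).
by rewrite mulrA Px -mulrA yP.
Qed.

Definition bounded_mul (x y : bounded_end) : bounded_end := BoundedEnd (bounded_mul_in x y).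

Lemma bounded_nu_algebra : is_nu_algebra bounded_mul.
Proof.
split=> [x y z|x y z|x y z|a x y|a x y]; apply: val_inj => /=.
- exact: mulrA.
- exact: mulrDl.
- exact: mulrDr.
- exact: lend_mulZl.
- exact: lend_mulZr.
Qed.

Lemma proj_bounded n : proj n \in bounded.
Proof. by apply/asboolP; exists n; rewrite !projK. Qed.

Lemma shift_bounded n : shift n \in bounded.
Proof. by apply/asboolP; exists n.+1; rewrite projS_shift shift_projS. Qed.

Lemma unshift_bounded n : unshift n \in bounded.
Proof. by apply/asboolP; exists n.+1; rewrite projS_unshift unshift_projS. Qed.

Definition level n : bounded_end := BoundedEnd (proj_bounded n).

Lemma corner_level n (x : bounded_end) :
  proj n * bval x * proj n = bval x -> corner bounded_mul (level n) x.
Proof. by move=> xn; exists x; apply: val_inj; rewrite /= xn. Qed.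

Lemma bounded_elementwise : elementwise_locally_unit_regular bounded_mul.
Proof.
move=> x; have /asboolP[n xn] := bvalP x.
have [y0 xy0x] := lend_regular (bval x).
have [y [yn xyx yxy]] := corner_reflexive_inverse (projK n) xn xy0x.
have [Px xP] := corner_absorb (projK n) xn; have [Py yP] := corner_absorb (projK n) yn.
have PQ : proj n * proj n.+1 = proj n by rewrite proj_mul (minn_idPl (leqnSn n)).
have QP : proj n.+1 * proj n = proj n by rewrite proj_mul (minn_idPr (leqnSn n)).
have [u [v [uv vu xux Quu Qvv]]] := swindle_unit_regular (projK n) PQ QP
  (unshift_shift n) (shift_unshift n) (proj_shift n) (unshift_proj n)
  (projS_shift n) (unshift_projS n) (@diagD n) (diag_proj n) (@diagM n)
  (diag_shift n) (unshift_diag n) (projS_diag n) (diag_projS n)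
  (@diag_proj_corner n) (@proj_diag_corner n) xyx yxy Px xP Py yP.
have ub : u \in bounded by apply/asboolP; exists n.+1.
have vb : v \in bounded by apply/asboolP; exists n.+1.
exists (level n.+1), (BoundedEnd ub); split.
- by apply: val_inj; rewrite /= projK.
- exact: corner_level (proj_corner_le (leqnSn n) xn).
- split; first exact: corner_level.
  by exists (BoundedEnd vb); split; [exact: corner_level | split; apply: val_inj].
- exact: val_inj.
Qed.

Lemma proj0_neq0 : proj 0 != 0.
Proof.
have supp0 : supp_lt 0 (fun _ => 0%N) by apply/supp_ltP.
apply/eqP => /(congr1 (fun z : lend space => z (fun _ => 1) (fun _ => 0%N))).
by rewrite /= /projv supp0 => /eqP; rewrite oner_eq0.
Qed.

Lemma bounded_not_locally_unit_regular : ~ locally_unit_regular bounded_mul.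
Proof.
pose s := BoundedEnd (shift_bounded 0); pose t := BoundedEnd (unshift_bounded 0).
move=> /(_ [:: s; t]) [S [[_ Sadd Sscale Smul] Sst [e [[Se eid] ureg]]]].
have Ss : S s by apply: (Sst); rewrite inE eqxx.
have St : S t by apply: (Sst); rewrite !inE eqxx orbT.
pose x := s + (e + (-1) *: bounded_mul t s).
have Sx : S x by apply: (Sadd) => //; apply: (Sadd) => //; apply/Sscale/Smul.
have [u [[Su [w [Sw [_ wu]]]] xux]] := ureg x Sx.
have eid_val z : S z -> bval e * bval z = bval z /\ bval z * bval e = bval z.
  by move=> /eid[/(congr1 bval) ez /(congr1 bval) ze].
have [es se] := eid_val _ Ss; have [et te] := eid_val _ St.
have [ee _] := eid_val _ Se; have [eu _] := eid_val _ Su; have [_ we] := eid_val _ Sw.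
have xE : bval x = shift 0 + (bval e - proj 1) by rewrite /= scaleN1r unshift_shift.
have reg : bval x * bval u * bval x = bval x := congr1 bval xux.
rewrite xE in reg.
apply: (negP proj0_neq0); apply/eqP.
exact: (shift_unit_regular_eq0 es se et te ee (unshift_shift 0) (shift_unshift 0)
  (projS_shift 0) (shift_projS 0) (projS_unshift 0) (unshift_projS 0) (projK 1)
  eu we (congr1 bval wu) reg).
Qed.

End ShiftAlgebra.

Theorem mainTheorem16 (K : fieldType) :
  exists (V : lmodType K) (mul : V -> V -> V),
    [/\ is_nu_algebra mul,
        elementwise_locally_unit_regular mul
      & ~ locally_unit_regular mul].
Proof.
exists (bounded_end K), (@bounded_mul K); split.
- exact: bounded_nu_algebra.
- exact: bounded_elementwise.
- exact: bounded_not_locally_unit_regular.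
Qed.
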